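(* For all $y,k\in\mathbb N_0$, each of the following sets lies in $\mathcal L(C_2^5)$: \begin{enumerate} \item $y+2k+\{3,5,6,7\}+4\cdot[0,k]$; \item $y+2k+\{4,5,6,8\}+4\cdot[0,k]$; \item $y+2k+\{5,6,7,9,10,11\}+4\cdot[0,k]$; \item $y+2k+\{4,5,7,8,9\}+4\cdot[0,k]$; \item $y+2k+\{5,6,8,9,10,12\}+4\cdot[0,k]$; \item $y+2k+\{4,6,7,8,10\}+4\cdot[0,k]$. \end{enumerate}
   Context: $C_2^r$ denotes an elementary abelian $2$-group of rank $r$; $[a,b]=\{x\in\mathbb Z:a\le x\le b\}$. For $L,L'\subset\mathbb Z$ and $y,k\in\mathbb Z$: $L+L'=\{a+b:a\in L,b\in L'\}$, $y+L=\{y\}+L$, and $k\cdot L=\{ka:a\in L\}$ (so $4\cdot[0,k]=\{0,4,\dots,4k\}$). For a subset $G_0$ of a finite abelian group $G$, a sequence over $G_0$ is an element of the free abelian monoid $\mathcal F(G_0)$ with basis $G_0$ (a finite unordered list of elements of $G_0$, repetitions allowed). $\mathcal B(G_0)$ is the monoid of zero-sum sequences over $G_0$ (including the empty sequence). An atom is a minimal zero-sum sequence, i.e. a nonempty zero-sum sequence that is not a product of two nonempty zero-sum sequences. For $B\in\mathcal B(G_0)$, $\mathsf L(B)=\{k\in\mathbb N_0: B \text{ is a product of } k \text{ atoms}\}$, and $\mathcal L(G_0)=\{\mathsf L(B):B\in\mathcal B(G_0)\}$; $\mathcal L(G)$ is the case $G_0=G$. *)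

From HB Require Import structures.
From mathcomp Require Import all_boot all_order all_algebra.
Set Implicit Arguments. Unset Strict Implicit. Unset Printing Implicit Defensive.
Import GRing.Theory.
Local Open Scope ring_scope.

(* Sequences over a finite abelian group G: elements of the free abelian
   monoid F(G), represented by their multiplicity functions G -> nat. *)
Definition gseq (G : finZmodType) := {ffun G -> nat}.

Definition gseq_one (G : finZmodType) : gseq G := [ffun => 0%N].
Definition gseq_mul (G : finZmodType) (S T : gseq G) : gseq G :=
  [ffun g => (S g + T g)%N].
Definition gseq_prod (G : finZmodType) (s : seq (gseq G)) : gseq G :=
  foldr (@gseq_mul G) (gseq_one G) s.

Definition gseq_len (G : finZmodType) (S : gseq G) : nat := (\sum_(g : G) S g)%N.
Definition gseq_sum (G : finZmodType) (S : gseq G) : G := \sum_(g : G) g *+ S g.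

Definition zero_sum (G : finZmodType) (S : gseq G) : Prop := gseq_sum S = 0.

Definition atom (G : finZmodType) (A : gseq G) : Prop :=
  [/\ zero_sum A, (0 < gseq_len A)%N &
      ~ exists B C : gseq G, [/\ zero_sum B, zero_sum C, (0 < gseq_len B)%N,
                                 (0 < gseq_len C)%N & A = gseq_mul B C]].

Definition in_lengths (G : finZmodType) (B : gseq G) (k : nat) : Prop :=
  exists s : seq (gseq G), [/\ size s = k, (forall A, A \in s -> atom A) &
                                gseq_prod s = B].

Definition in_system_of_sets (G : finZmodType) (L : nat -> Prop) : Prop :=
  exists B : gseq G, zero_sum B /\ forall k, in_lengths B k <-> L k.

Definition shifted_set (y k : nat) (S : seq nat) (n : nat) : Prop :=
  exists s j, s \in S /\ (j <= k)%N /\ n = (y + 2 * k + s + 4 * j)%N.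

Definition C2_5 : finZmodType := 'rV['F_2]_5.

(* Let e1, ..., e5 be the standard basis of C_2^5, e0 = e1 + ... + e5, f = e1 + e2 and
   g = e3 + e4, and let G0 = {0, e1, ..., e5, e0, f, g}.  Every one of the six sets is
   the set of lengths of a sequence
       B(y, p, q, r) = 0^y (e1 e2)^p (e3 e4)^q (e5 e0)^r f g            (fg_seq)
   for suitable p, q, r that are affine in k.  A finite computation shows
      that the atoms over G0 are exactly fifteen sequences (atom_mults): 0, the eight
      squares, e1e2f, e3e4g, e5e0fg, e1e2e5e0g, e3e4e5e0f and e1e2e3e4e5e0.  Hence a
      factorization of a sequence over G0 is a vector of atom counts c in N^15 solving
      a linear system, and its length is the sum of c (lengths_G0P).
   2. For B(y, p, q, r) the terms f and g are covered in one of five ways, the rest being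
      squares and copies of e1e2e3e4e5e0; this yields an explicit description fg_length
      of the set of lengths (fg_lengthsP).
   3. Each of the six sets is an interval with one residue class mod 4 removed, shifted by
      4.[0,k]; explicit factorizations and interval/residue bounds identify it with
      fg_length for the right p, q, r. *)

From mathcomp Require Import all_boot all_order all_algebra zify.
Import GRing.Theory.
Set Implicit Arguments. Unset Strict Implicit.
Local Open Scope ring_scope.

Section SequenceAlgebra.
Variable G : finZmodType.

Lemma gseq_sum_mul (S T : gseq G) : gseq_sum (gseq_mul S T) = gseq_sum S + gseq_sum T.
Proof. by rewrite /gseq_sum -big_split; apply: eq_bigr => g _; rewrite ffunE mulrnDr. Qed.

Lemma atom_eq_divisor (A S : gseq G) : atom A -> (forall g, S g <= A g)%N ->
  zero_sum S -> (0 < gseq_len S)%N -> A = S.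
Proof.
case=> zA _ indec leSA zS lS.
pose C : gseq G := [ffun g => (A g - S g)%N].
have AC : A = gseq_mul S C by apply/ffunP => g; rewrite !ffunE subnKC.
have zC : zero_sum C by move: zA; rewrite /zero_sum AC gseq_sum_mul zS add0r.
have [C0 | lC] := posnP (gseq_len C); last by case: indec; exists S, C.
apply/ffunP => g; rewrite AC ffunE.
move/eqP: C0; rewrite /gseq_len sum_nat_eq0 => /forallP /(_ g) /eqP ->.
by rewrite addn0.
Qed.

Lemma gseq_prod_ge (s : seq (gseq G)) A : A \in s -> forall g, (A g <= gseq_prod s g)%N.
Proof.
elim: s => [|B s IH] //=; rewrite inE => /orP [/eqP -> | As] g; rewrite ffunE.
  exact: leq_addr.
exact: leq_trans (IH As g) (leq_addl _ _).
Qed.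

Lemma in_lengths_zero_sum (B : gseq G) n : in_lengths B n -> zero_sum B.
Proof.
case=> s [_ atoms <-]; elim: s atoms => [|A s IH] atoms /=.
  by rewrite /zero_sum /gseq_sum big1 // => g _; rewrite ffunE.
have [zA _ _] := atoms A (mem_head _ _).
rewrite /zero_sum gseq_sum_mul zA add0r; apply: IH => A1 A1s.
by apply: atoms; rewrite inE A1s orbT.
Qed.

End SequenceAlgebra.

Lemma F2_natr_odd n : (n%:R : 'F_2) = (odd n)%:R.
Proof.
by rewrite {1}(divn_eq n 2) natrD natrM (pchar_Fp_0 (p:=2)) // mulr0 add0r modn2.
Qed.

Lemma F2_natr_eq0 n : ((n%:R : 'F_2) == 0) = ~~ odd n.
Proof. by rewrite F2_natr_odd; case: odd; rewrite ?oner_eq0. Qed.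

Definition bitvec (b : seq nat) : C2_5 := \row_(j < 5) (nth 0%N b j)%:R.

Definition bitlist : pred (seq nat) := [pred b | (size b == 5) && all (leq^~ 1%N) b].

Lemma bitvec_inj : {in bitlist &, injective bitvec}.
Proof.
move=> b b' /andP[/eqP sb /allP bb] /andP[/eqP sb' /allP bb'] E.
apply: (eq_from_nth (x0 := 0%N)) => [|i]; first by rewrite sb sb'.
rewrite sb => lti5; have := congr1 (fun g : C2_5 => g ord0 (Ordinal lti5)) E.
rewrite !mxE /= (F2_natr_odd (nth _ b i)) (F2_natr_odd (nth _ b' i)).
have /bb le : nth 0%N b i \in b by rewrite mem_nth ?sb.
have /bb' le' : nth 0%N b' i \in b' by rewrite mem_nth ?sb'.
by case: (nth 0%N b i) le => [|[|]] //; case: (nth 0%N b' i) le' => [|[|]] //= _ _ /eqP;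
  rewrite ?oner_eq0 // eq_sym oner_eq0.
Qed.

(* G0 = [0; e1; e2; e3; e4; e5; e0; f; g] with e0 = e1 + ... + e5, f = e1 + e2, g = e3 + e4. *)
Definition G0_bits : seq (seq nat) :=
  [:: [:: 0;0;0;0;0]; [:: 1;0;0;0;0]; [:: 0;1;0;0;0]; [:: 0;0;1;0;0]; [:: 0;0;0;1;0];
      [:: 0;0;0;0;1]; [:: 1;1;1;1;1]; [:: 1;1;0;0;0]; [:: 0;0;1;1;0]]%N.
Definition G0 : seq C2_5 := map bitvec G0_bits.

Lemma G0_uniq : uniq G0.
Proof. by rewrite map_inj_in_uniq //; apply: sub_in2 bitvec_inj; apply/allP. Qed.

Lemma size_G0 : size G0 = 9%N. Proof. by []. Qed.

Lemma index_G0 g : g \in G0 -> (index g G0 < 9)%N.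
Proof. by rewrite -index_mem. Qed.

Definition G0seq (m : seq nat) : gseq C2_5 :=
  [ffun g => if g \in G0 then nth 0%N m (index g G0) else 0%N].

Definition mults (A : gseq C2_5) : seq nat := [seq A (nth 0 G0 i) | i <- iota 0 9].

Lemma nth_iota9 (F : nat -> nat) i : (i < 9)%N -> nth 0%N [seq F j | j <- iota 0 9] i = F i.
Proof. by move=> lti9; rewrite (nth_map 0%N) ?size_iota // nth_iota. Qed.

Lemma size_mults A : size (mults A) = 9%N. Proof. by rewrite size_map size_iota. Qed.

Lemma G0seq_nth m i : (i < 9)%N -> G0seq m (nth 0 G0 i) = nth 0%N m i.
Proof. by move=> lti9; rewrite ffunE mem_nth // index_uniq // G0_uniq. Qed.

Definition on_G0 (A : gseq C2_5) : Prop := forall g, g \notin G0 -> A g = 0%N.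

Lemma G0seq_on_G0 m : on_G0 (G0seq m).
Proof. by move=> g g'G0; rewrite ffunE (negbTE g'G0). Qed.

Lemma on_G0_le (A B : gseq C2_5) : on_G0 A -> (forall g, B g <= A g)%N -> on_G0 B.
Proof. by move=> onA leBA g g'G0; apply/eqP; rewrite -leqn0 -(onA g g'G0) leBA. Qed.

Lemma G0seq_ext m m' : (forall i, (i < 9)%N -> nth 0%N m i = nth 0%N m' i) ->
  G0seq m = G0seq m'.
Proof.
by move=> eqm; apply/ffunP => g; rewrite !ffunE; case: ifP => // /index_G0 /eqm.
Qed.

Lemma G0seq_inj m m' : size m = 9%N -> size m' = 9%N -> G0seq m = G0seq m' -> m = m'.
Proof.
move=> sm sm' E; apply: (eq_from_nth (x0 := 0%N)) => [|i]; first by rewrite sm sm'.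
by rewrite sm => lti9; rewrite -!G0seq_nth // E.
Qed.

Lemma G0seq_mults (A : gseq C2_5) : on_G0 A -> A = G0seq (mults A).
Proof.
move=> suppA; apply/ffunP => g; rewrite ffunE; case: ifP => g_G0; last by rewrite suppA ?g_G0.
by rewrite nth_iota9 ?index_G0 // nth_index.
Qed.

Lemma G0seq_le m m' : (forall i, (i < 9)%N -> nth 0%N m i <= nth 0%N m' i)%N ->
  forall g, (G0seq m g <= G0seq m' g)%N.
Proof. by move=> lemm' g; rewrite !ffunE; case: ifP => // /index_G0 /lemm'. Qed.

Definition add_mults (m m' : seq nat) := [seq (nth 0 m i + nth 0 m' i)%N | i <- iota 0 9].

Lemma G0seq_mul m m' : gseq_mul (G0seq m) (G0seq m') = G0seq (add_mults m m').
Proof.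
by apply/ffunP => g; rewrite !ffunE; case: ifP => // /index_G0 /nth_iota9 ->.
Qed.

Lemma sumn_iota (F : nat -> nat) n : sumn [seq F i | i <- iota 0 n] = (\sum_(i < n) F i)%N.
Proof. by rewrite sumnE big_map -(big_mkord xpredT) /index_iota subn0. Qed.

Definition len_mults (m : seq nat) := sumn [seq nth 0%N m i | i <- iota 0 9].

Lemma len_G0seq m : gseq_len (G0seq m) = len_mults m.
Proof.
rewrite /len_mults sumn_iota /gseq_len (bigID (mem G0)) /=.
rewrite [X in (_ + X)%N]big1 ?addn0 => [|g]; last exact: G0seq_on_G0.
rewrite -big_uniq ?G0_uniq // (big_nth 0) size_G0 big_mkord.
by apply: eq_bigr => i _; rewrite G0seq_nth.
Qed.

Definition zero_sum_mults (m : seq nat) : bool :=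
  all (fun j => ~~ odd (sumn [seq (nth 0%N (nth [::] G0_bits i) j * nth 0%N m i)%N | i <- iota 0 9]))
      (iota 0 5).

Lemma G0seq_sum_coord m (j : 'I_5) : gseq_sum (G0seq m) ord0 j =
  ((\sum_(i < 9) nth 0%N (nth [::] G0_bits i) j * nth 0%N m i)%N%:R : 'F_2).
Proof.
rewrite /gseq_sum (bigID (mem G0)) /= [X in _ + X]big1 ?addr0 => [|g]; last first.
  by move/G0seq_on_G0 ->.
rewrite -big_uniq ?G0_uniq // (big_nth 0) size_G0 big_mkord summxE natr_sum.
apply: eq_bigr => i _; rewrite G0seq_nth // mulmxnE (nth_map [::]) ?size_G0 //=.
by rewrite mxE natrM mulr_natr.
Qed.

Lemma zero_sum_G0seq m : zero_sum (G0seq m) <-> zero_sum_mults m.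
Proof.
split => [zm | /allP zm].
- apply/allP => j; rewrite mem_iota add0n => /andP[_ ltj5].
  have := congr1 (fun g : C2_5 => g ord0 (Ordinal ltj5)) zm.
  by rewrite G0seq_sum_coord mxE sumn_iota -F2_natr_eq0 => ->.
- apply/rowP => j; rewrite G0seq_sum_coord mxE.
  have := zm j; rewrite mem_iota add0n ltn_ord => /(_ isT).
  by rewrite sumn_iota -F2_natr_eq0 => /eqP.
Qed.

(* The fifteen atoms over G0: 0 and the squares of the eight nonzero elements, then
   e1e2f, e3e4g, e5e0fg, e1e2e5e0g, e3e4e5e0f and e1e2e3e4e5e0. *)
Definition atom_mults : seq (seq nat) := [::
  [:: 1;0;0;0;0;0;0;0;0]; [:: 0;2;0;0;0;0;0;0;0]; [:: 0;0;2;0;0;0;0;0;0];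
  [:: 0;0;0;2;0;0;0;0;0]; [:: 0;0;0;0;2;0;0;0;0]; [:: 0;0;0;0;0;2;0;0;0];
  [:: 0;0;0;0;0;0;2;0;0]; [:: 0;0;0;0;0;0;0;2;0]; [:: 0;0;0;0;0;0;0;0;2];
  [:: 0;1;1;0;0;0;0;1;0]; [:: 0;0;0;1;1;0;0;0;1]; [:: 0;0;0;0;0;1;1;1;1];
  [:: 0;1;1;0;0;1;1;0;1]; [:: 0;0;0;1;1;1;1;1;0]; [:: 0;1;1;1;1;1;1;0;0]]%N.

Definition G0atom (i : nat) : gseq C2_5 := G0seq (nth [::] atom_mults i).

Definition le_mults (m m' : seq nat) := all (fun i => nth 0%N m i <= nth 0%N m' i)%N (iota 0 9).

Lemma le_multsP m m' : le_mults m m' -> forall g, (G0seq m g <= G0seq m' g)%N.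
Proof. by move/allP=> le g; apply: G0seq_le => i lti9; apply: le; rewrite mem_iota. Qed.

Fixpoint below (a : seq nat) : seq (seq nat) :=
  if a is x :: a' then [seq y :: b | y <- iota 0 x.+1, b <- below a'] else [:: [::]].

Lemma mem_below a b : size b = size a -> (forall i, nth 0%N b i <= nth 0%N a i)%N ->
  b \in below a.
Proof.
elim: a b => [|x a IH] [|y b] // [sb] leba.
apply/allpairsPdep; exists y, b; split => //; first by rewrite mem_iota ltnS (leba 0%N).
by apply: IH => // i; exact: (leba i.+1).
Qed.

Lemma mults_below (A : gseq C2_5) a : size a = 9%N -> (forall g, A g <= G0seq a g)%N -> mults A \in below a.
Proof.
move=> sa leA; apply: mem_below; first by rewrite size_mults sa.
move=> i; case: (ltnP i 9) => lti9; last by rewrite !nth_default ?size_mults ?sa.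
by rewrite nth_iota9 // -G0seq_nth.
Qed.

Lemma atom_mults_ok : all (fun a => zero_sum_mults a && (0 < len_mults a)%N) atom_mults.
Proof. by []. Qed.

Lemma G0atom_nonempty_zero_sum i : (i < 15)%N ->
  zero_sum (G0atom i) /\ (0 < gseq_len (G0atom i))%N.
Proof.
move=> lti15; have /allP/(_ (nth [::] atom_mults i)) := atom_mults_ok.
rewrite mem_nth // => /(_ isT) /andP[zm lm].
by split; [apply/zero_sum_G0seq | rewrite len_G0seq].
Qed.

(* A sequence containing 0, or a nonzero element of G0 twice, contains one of the
   first nine atoms; otherwise its multiplicities are bounded by squarefree_mults. *)
Definition square_bound (i : nat) := if i == 0%N then 1%N else 2%N.

Lemma square_le m i : (i < 9)%N -> (square_bound i <= nth 0%N m i)%N ->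
  le_mults (nth [::] atom_mults i) m.
Proof.
move=> lti9; do 9 (case: i lti9 => [|i] lti9;
  first by rewrite /square_bound /= => le; rewrite /le_mults /= le ?leq0n).
by [].
Qed.

Definition squarefree_mults := [seq (square_bound i).-1 | i <- iota 0 9].

Lemma squarefree_cover : all (fun m => ~~ zero_sum_mults m || (len_mults m == 0%N) ||
    has (fun i => le_mults (nth [::] atom_mults i) m) (iota 0 15)) (below squarefree_mults).
Proof. by vm_compute. Qed.

Lemma contains_G0atom m : size m = 9%N -> zero_sum (G0seq m) -> (0 < gseq_len (G0seq m))%N ->
  has (fun i => le_mults (nth [::] atom_mults i) m) (iota 0 15).
Proof.
move=> sm zm lm.
have [small | big] := boolP (all (fun i => nth 0%N m i < square_bound i)%N (iota 0 9)); last first.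
  move: big; rewrite -has_predC => /hasP[i]; rewrite mem_iota => lti9.
  rewrite [predC _ _]/= -leqNgt => bound_le.
  by apply/hasP; exists i; [rewrite mem_iota (leq_trans lti9) | exact: square_le].
have m_below : m \in below squarefree_mults.
  apply: mem_below => [|i]; first by rewrite sm.
  case: (ltnP i 9) => lti9; last by rewrite !nth_default ?sm.
  rewrite nth_iota9 //; have := allP small i; rewrite mem_iota lti9 => /(_ isT).
  by case: (square_bound i).
case/orP: (allP squarefree_cover m m_below) => [/orP[|] | //].
  by move/zero_sum_G0seq: zm => ->.
by move: lm; rewrite len_G0seq => /[swap] /eqP ->.
Qed.

Lemma atom_on_G0 (A : gseq C2_5) : atom A -> on_G0 A -> exists2 i, (i < 15)%N & A = G0atom i.
Proof.
move=> atomA onA; have AG0 := G0seq_mults onA.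
have [zA lA _] := atomA; rewrite AG0 in zA lA.
have /hasP [i] := contains_G0atom (size_mults A) zA lA.
rewrite mem_iota => lti15 le_iA; exists i => //; apply: atom_eq_divisor atomA _ _ _.
- by move=> g; rewrite AG0; exact: le_multsP.
- exact: (G0atom_nonempty_zero_sum lti15).1.
- exact: (G0atom_nonempty_zero_sum lti15).2.
Qed.

Definition sub_mults (m m' : seq nat) := [seq (nth 0%N m i - nth 0%N m' i)%N | i <- iota 0 9].

Lemma atom_mults_indecomposable : all (fun a => (size a == 9%N) && all (fun b =>
   ~~ [&& zero_sum_mults b, (0 < len_mults b)%N, zero_sum_mults (sub_mults a b)
        & (0 < len_mults (sub_mults a b))%N]) (below a)) atom_mults.
Proof. by vm_compute. Qed.

Lemma G0atom_atom i : (i < 15)%N -> atom (G0atom i).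
Proof.
move=> lti15; have [zA lA] := G0atom_nonempty_zero_sum lti15; split => //.
case=> B [C [zB zC lB lC E]].
have /andP[/eqP sa indec] := allP atom_mults_indecomposable _ (mem_nth [::] (lti15 : i < size atom_mults)%N).
move: E; rewrite /G0atom; set a := nth [::] atom_mults i => E.
have leB g : (B g <= G0seq a g)%N by rewrite E ffunE leq_addr.
have leC g : (C g <= G0seq a g)%N by rewrite E ffunE leq_addl.
have BG0 := G0seq_mults (on_G0_le (@G0seq_on_G0 a) leB).
have CG0 : C = G0seq (sub_mults a (mults B)).
  rewrite (G0seq_mults (on_G0_le (@G0seq_on_G0 a) leC)); apply: G0seq_ext => j ltj9.
  by rewrite !nth_iota9 // -(G0seq_nth a ltj9) E ffunE addKn.
have := allP indec _ (mults_below sa leB).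
rewrite BG0 in zB lB; rewrite CG0 in zC lC.
move/zero_sum_G0seq: zB => ->; move/zero_sum_G0seq: zC => ->.
by move: lB lC; rewrite !len_G0seq => -> ->.
Qed.

Local Close Scope ring_scope.

(* Counting atoms.  A vector c : nat -> nat gives the number c i of copies of the
   i-th atom; sum15 c is the number of atoms and atom_system c the multiplicity
   vector of their product. *)
Definition sum15 (F : nat -> nat) : nat :=
  F 0 + F 1 + F 2 + F 3 + F 4 + F 5 + F 6 + F 7 + F 8 + F 9 + F 10 + F 11 + F 12 + F 13 + F 14.

Lemma sum15E F : sum15 F = \sum_(i < 15) F i.
Proof. by rewrite !big_ord_recr big_ord0. Qed.

Definition atom_system (c : nat -> nat) : seq nat :=
  [seq sum15 (fun i => c i * nth 0 (nth [::] atom_mults i) j) | j <- iota 0 9].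

Lemma size_atom_system c : size (atom_system c) = 9.
Proof. by rewrite size_map size_iota. Qed.

Lemma eq_atom_system c c' : (forall i, i < 15 -> c i = c' i) -> atom_system c = atom_system c'.
Proof.
move=> eqc; apply: eq_map => j; rewrite !sum15E.
by apply: eq_bigr => i _; rewrite eqc.
Qed.

Lemma sum_delta x (F : nat -> nat) : x < 15 -> \sum_(i < 15) (x == i) * F i = F x.
Proof.
move=> ltx15; rewrite (bigD1 (Ordinal ltx15)) //= eqxx mul1n big1 ?addn0 // => i ne_ix.
by move: ne_ix; rewrite -val_eqE /= eq_sym => /negbTE ->.
Qed.

Definition atom_indices (t : seq nat) := all (fun x => x < 15) t.

Lemma G0atom_prod t : atom_indices t ->
  gseq_prod (map G0atom t) = G0seq (atom_system (fun i => count_mem i t)).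
Proof.
elim: t => [_ | x t IH /andP[ltx15 t15]].
  by apply/ffunP => g; rewrite !ffunE; case: ifP => // /index_G0 /nth_iota9 ->.
rewrite /= IH // /G0atom G0seq_mul; apply: G0seq_ext => j ltj9.
rewrite !nth_iota9 // !sum15E.
under [X in _ = X]eq_bigr => i _ do rewrite mulnDl.
by rewrite big_split /= (sum_delta (fun i => nth 0 (nth [::] atom_mults i) j)).
Qed.

Lemma sum15_count t : atom_indices t -> sum15 (fun i => count_mem i t) = size t.
Proof.
rewrite sum15E; elim: t => [|x t IH /andP[ltx15 t15]]; first by rewrite big1.
rewrite big_split /= IH // -[RHS]add1n; congr (_ + _).
by under eq_bigr => i _ do rewrite -[nat_of_bool _]muln1; rewrite (sum_delta (fun=> 1)).
Qed.

Lemma count_replicate (c : nat -> nat) i : i < 15 ->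
  count_mem i (flatten [seq nseq (c k) k | k <- iota 0 15]) = c i.
Proof.
move=> lti15; rewrite count_flatten -map_comp sumn_iota.
under eq_bigr => k _ do rewrite /= count_nseq /= eq_sym.
by rewrite sum_delta.
Qed.

Lemma lengths_G0P b n : size b = 9 ->
  in_lengths (G0seq b) n <-> exists c, n = sum15 c /\ atom_system c = b.
Proof.
move=> sb; split.
- case=> s [<- atoms prod_s].
  have onG0 A : A \in s -> on_G0 A.
    by move=> As; apply: on_G0_le (@G0seq_on_G0 b) _ => g; rewrite -prod_s gseq_prod_ge.
  have [t t15 def_s] : exists2 t, atom_indices t & s = map G0atom t.
    elim: s atoms onG0 {prod_s} => [|A s IH] atoms onG0; first by exists [::].
    have [i lti15 ->] := atom_on_G0 (atoms A (mem_head _ _)) (onG0 A (mem_head _ _)).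
    have atoms' B : B \in s -> atom B by move=> Bs; apply: atoms; rewrite inE Bs orbT.
    have onG0' B : B \in s -> on_G0 B by move=> Bs; apply: onG0; rewrite inE Bs orbT.
    have [t t15 ->] := IH atoms' onG0'.
    by exists (i :: t); rewrite //= lti15.
  exists (fun i => count_mem i t); split; first by rewrite def_s size_map sum15_count.
  by apply: G0seq_inj; rewrite ?size_atom_system // -G0atom_prod // -def_s.
- case=> c [-> <-].
  set t := flatten [seq nseq (c k) k | k <- iota 0 15].
  have t15 : atom_indices t.
    by apply/allP => x /flattenP [l /mapP [k]]; rewrite mem_iota => /andP[_ ltk15] -> /nseqP [->].
  exists (map G0atom t); split.
  + by rewrite size_map -sum15_count // sum15E [RHS]sum15E; apply: eq_bigr => i _; rewrite count_replicate.
  + by move=> A /mapP [x /(allP t15) ltx15 ->]; apply: G0atom_atom.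
  + by rewrite G0atom_prod //; congr G0seq; apply: eq_atom_system => i; apply: count_replicate.
Qed.

(* B(y, p, q, r) = 0^y (e1 e2)^p (e3 e4)^q (e5 e0)^r f g. *)
Definition fg_seq (y p q r : nat) : gseq C2_5 := G0seq [:: y; p; p; q; q; r; r; 1; 1].

(* Besides the y atoms 0, a factorization uses t copies
   of e1e2e3e4e5e0, 2u + 2v + 2w squares of e1, e2, e3, e4, e5, e0, and covers f and g
   by e1e2f and e3e4g, by e1e2f and e1e2e5e0g, by e3e4g and e3e4e5e0f, by e5e0fg, or by
   e1e2e5e0g and e3e4e5e0f (the five disjuncts, in this order). *)
Definition fg_length (y p q r n : nat) : Prop :=
  exists t u v w : nat,
    (p = t + 2 * u + 1 /\ q = t + 2 * v + 1 /\ r = t + 2 * w /\ n = y + t + 2 * (u + v + w) + 2) \/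
    (p = t + 2 * u + 2 /\ q = t + 2 * v /\ r = t + 2 * w + 1 /\ n = y + t + 2 * (u + v + w) + 2) \/
    (p = t + 2 * u /\ q = t + 2 * v + 2 /\ r = t + 2 * w + 1 /\ n = y + t + 2 * (u + v + w) + 2) \/
    (p = t + 2 * u /\ q = t + 2 * v /\ r = t + 2 * w + 1 /\ n = y + t + 2 * (u + v + w) + 1) \/
    (p = t + 2 * u + 1 /\ q = t + 2 * v + 1 /\ r = t + 2 * w + 2 /\ n = y + t + 2 * (u + v + w) + 2).

Lemma fg_length_of_counts y p q r c : atom_system c = [:: y; p; p; q; q; r; r; 1; 1] ->
  fg_length y p q r (sum15 c).
Proof.
rewrite /atom_system /sum15 /=; case=> E0 E1 E2 E3 E4 E5 E6 E7 E8.
exists (c 14), (c 1), (c 3), (c 5).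
move: (c 0) (c 1) (c 2) (c 3) (c 4) (c 5) (c 6) (c 7) (c 8) (c 9) (c 10) (c 11) (c 12) (c 13) (c 14)
  E0 E1 E2 E3 E4 E5 E6 E7 E8 => c0 c1 c2 c3 c4 c5 c6 c7 c8 c9 c10 c11 c12 c13 c14.
rewrite ?muln0 ?muln1 ?addn0 ?add0n => E0 E1 E2 E3 E4 E5 E6 E7 E8.
have c7_0 : c7 = 0 by lia.
have c8_0 : c8 = 0 by lia.
have c2_1 : c2 = c1 by lia.
have c4_3 : c4 = c3 by lia.
have c6_5 : c6 = c5 by lia.
subst c0 c2 c4 c6 c7 c8 p q r.
(* f lies in exactly one of the atoms 9, 11, 13 and g in exactly one of 10, 11, 12. *)
have f_cases : c9 = 1 /\ c11 = 0 /\ c13 = 0 \/ c9 = 0 /\ c11 = 1 /\ c13 = 0 \/ c9 = 0 /\ c11 = 0 /\ c13 = 1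
  by lia.
have g_cases : c10 = 1 /\ c11 = 0 /\ c12 = 0 \/ c10 = 0 /\ c11 = 1 /\ c12 = 0 \/ c10 = 0 /\ c11 = 0 /\ c12 = 1
  by lia.
case: f_cases => [[? [? ?]]|[[? [? ?]]|[? [? ?]]]];
  case: g_cases => [[? [? ?]]|[[? [? ?]]|[? [? ?]]]]; subst; lia.
Qed.

Lemma counts_of_fg_length y p q r n : fg_length y p q r n ->
  exists c, n = sum15 c /\ atom_system c = [:: y; p; p; q; q; r; r; 1; 1].
Proof.
case=> t [u [v [w H]]].
pose counts e := nth 0 ([:: y; u; u; v; v; w; w; 0; 0] ++ e ++ [:: t]).
case: H => [[->[->[->->]]]|[[->[->[->->]]]|[[->[->[->->]]]|[[->[->[->->]]]|[->[->[->->]]]]]]];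
  [ exists (counts [:: 1; 1; 0; 0; 0]) | exists (counts [:: 1; 0; 0; 1; 0])
  | exists (counts [:: 0; 1; 0; 0; 1]) | exists (counts [:: 0; 0; 1; 0; 0])
  | exists (counts [:: 0; 0; 0; 1; 1]) ].
all: rewrite /counts /atom_system /sum15 /=; split; [|congr [:: _; _; _; _; _; _; _; _; _]]; lia.
Qed.

Lemma fg_lengthsP y p q r n : in_lengths (fg_seq y p q r) n <-> fg_length y p q r n.
Proof.
rewrite lengths_G0P //; split=> [[c [-> sys]] | /counts_of_fg_length //].
exact: fg_length_of_counts.
Qed.

Definition residue_window (lo w e : nat) : seq nat := [seq s <- iota lo w.+1 | s %% 4 != e].

Lemma residue_window_shifted y k lo w e n : 3 <= w ->
  y + 2 * k + lo <= n <= y + 2 * k + lo + w + 4 * k /\ (n - y - 2 * k) %% 4 != e ->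
  shifted_set y k (residue_window lo w e) n.
Proof.
move=> w3 [/andP[lo_n n_hi] n_e]; pose j := minn k ((n - y - 2 * k - lo) %/ 4).
exists (n - y - 2 * k - 4 * j), j; rewrite mem_filter mem_iota.
by split; [apply/andP; split; [|apply/andP; split] | split]; lia.
Qed.

Lemma fg_lengths_3567 y k n :
  shifted_set y k [:: 3; 5; 6; 7] n <-> fg_length y (2 + 2 * k) (2 + 2 * k) (3 + 2 * k) n.
Proof.
split=> [[s [j [sS [lejk ->]]]] | [t [u [v [w H]]]]]; last first.
  rewrite (_ : [:: 3; 5; 6; 7] = residue_window 3 4 0) //.
  by apply: residue_window_shifted => //; case: H => [|[|[|[|]]]] H; lia.
move: sS; rewrite !inE => /orP[/eqP->|/orP[/eqP->|/orP[/eqP->|/eqP->]]];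
  [ exists (2 + 2 * (k - j)), j, j, j
  | exists (1 + 2 * (k - j)), j, j, j.+1
  | exists (2 * (k - j)), j, j.+1, j.+1
  | exists (2 * (k - j)), j.+1, j.+1, j.+1 ]; lia.
Qed.

Lemma fg_lengths_4568 y k n :
  shifted_set y k [:: 4; 5; 6; 8] n <-> fg_length y (3 + 2 * k) (3 + 2 * k) (2 + 2 * k) n.
Proof.
split=> [[s [j [sS [lejk ->]]]] | [t [u [v [w H]]]]]; last first.
  rewrite (_ : [:: 4; 5; 6; 8] = residue_window 4 4 3) //.
  by apply: residue_window_shifted => //; case: H => [|[|[|[|]]]] H; lia.
move: sS; rewrite !inE => /orP[/eqP->|/orP[/eqP->|/orP[/eqP->|/eqP->]]];
  [ exists (2 + 2 * (k - j)), j, j, j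
  | exists (1 + 2 * (k - j)), j, j.+1, j
  | exists (1 + 2 * (k - j)), j.+1, j.+1, j
  | exists (2 * (k - j)), j.+1, j.+1, j.+1 ]; lia.
Qed.

Lemma fg_lengths_56791011 y k n :
  shifted_set y k [:: 5; 6; 7; 9; 10; 11] n <-> fg_length y (4 + 2 * k) (4 + 2 * k) (3 + 2 * k) n.
Proof.
split=> [[s [j [sS [lejk ->]]]] | [t [u [v [w H]]]]]; last first.
  rewrite (_ : [:: 5; 6; 7; 9; 10; 11] = residue_window 5 6 0) //.
  by apply: residue_window_shifted => //; case: H => [|[|[|[|]]]] H; lia.
move: sS; rewrite !inE => /orP[/eqP->|/orP[/eqP->|/orP[/eqP->|/orP[/eqP->|/orP[/eqP->|/eqP->]]]]];
  [ exists (3 + 2 * (k - j)), j, j, j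
  | exists (2 + 2 * (k - j)), j, j.+1, j
  | exists (2 + 2 * (k - j)), j.+1, j.+1, j
  | exists (1 + 2 * (k - j)), j.+1, j.+1, j.+1
  | exists (2 * (k - j)), j.+1, j.+2, j.+1
  | exists (2 * (k - j)), j.+2, j.+2, j.+1 ]; lia.
Qed.

Lemma fg_lengths_45789 y k n :
  shifted_set y k [:: 4; 5; 7; 8; 9] n <-> fg_length y (2 + 2 * k) (4 + 2 * k) (3 + 2 * k) n.
Proof.
split=> [[s [j [sS [lejk ->]]]] | [t [u [v [w H]]]]]; last first.
  rewrite (_ : [:: 4; 5; 7; 8; 9] = residue_window 4 5 2) //.
  by apply: residue_window_shifted => //; case: H => [|[|[|[|]]]] H; lia.
move: sS; rewrite !inE => /orP[/eqP->|/orP[/eqP->|/orP[/eqP->|/orP[/eqP->|/eqP->]]]];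
  [ exists (2 + 2 * (k - j)), j, j, j
  | exists (2 + 2 * (k - j)), j, j.+1, j
  | exists (1 + 2 * (k - j)), j, j.+1, j.+1
  | exists (2 * (k - j)), j, j.+2, j.+1
  | exists (2 * (k - j)), j.+1, j.+2, j.+1 ]; lia.
Qed.

Lemma fg_lengths_56891012 y k n :
  shifted_set y k [:: 5; 6; 8; 9; 10; 12] n <-> fg_length y (3 + 2 * k) (5 + 2 * k) (4 + 2 * k) n.
Proof.
split=> [[s [j [sS [lejk ->]]]] | [t [u [v [w H]]]]]; last first.
  rewrite (_ : [:: 5; 6; 8; 9; 10; 12] = residue_window 5 7 3) //.
  by apply: residue_window_shifted => //; case: H => [|[|[|[|]]]] H; lia.
move: sS; rewrite !inE => /orP[/eqP->|/orP[/eqP->|/orP[/eqP->|/orP[/eqP->|/orP[/eqP->|/eqP->]]]]];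
  [ exists (3 + 2 * (k - j)), j, j, j
  | exists (3 + 2 * (k - j)), j, j.+1, j
  | exists (2 + 2 * (k - j)), j, j.+1, j.+1
  | exists (1 + 2 * (k - j)), j, j.+2, j.+1
  | exists (1 + 2 * (k - j)), j.+1, j.+2, j.+1
  | exists (2 * (k - j)), j.+1, j.+2, j.+2 ]; lia.
Qed.

Lemma fg_lengths_467810 y k n :
  shifted_set y k [:: 4; 6; 7; 8; 10] n <-> fg_length y (3 + 2 * k) (3 + 2 * k) (4 + 2 * k) n.
Proof.
split=> [[s [j [sS [lejk ->]]]] | [t [u [v [w H]]]]]; last first.
  rewrite (_ : [:: 4; 6; 7; 8; 10] = residue_window 4 6 1) //.
  by apply: residue_window_shifted => //; case: H => [|[|[|[|]]]] H; lia.
move: sS; rewrite !inE => /orP[/eqP->|/orP[/eqP->|/orP[/eqP->|/orP[/eqP->|/eqP->]]]];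
  [ exists (3 + 2 * (k - j)), j, j, j
  | exists (2 + 2 * (k - j)), j, j, j.+1
  | exists (1 + 2 * (k - j)), j, j.+1, j.+1
  | exists (1 + 2 * (k - j)), j.+1, j.+1, j.+1
  | exists (2 * (k - j)), j.+1, j.+1, j.+2 ]; lia.
Qed.

(* The sets y + 2k + S + 4.[0,k] are nonempty, so their sequence is zero-sum. *)
Lemma shifted_set_head y k s S : shifted_set y k (s :: S) (y + 2 * k + s).
Proof. by exists s, 0; rewrite mem_head muln0 addn0. Qed.

Lemma fg_system y p q r (L : nat -> Prop) n0 :
  L n0 -> (forall n, L n <-> fg_length y p q r n) -> in_system_of_sets C2_5 L.
Proof.
move=> Ln0 eqL; exists (fg_seq y p q r); split=> [|n]; last by rewrite fg_lengthsP eqL.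
by apply: (@in_lengths_zero_sum _ _ n0); apply/fg_lengthsP/eqL.
Qed.

Theorem lemma3p9 (y k : nat) :
  in_system_of_sets C2_5 (shifted_set y k [:: 3; 5; 6; 7]) /\
  in_system_of_sets C2_5 (shifted_set y k [:: 4; 5; 6; 8]) /\
  in_system_of_sets C2_5 (shifted_set y k [:: 5; 6; 7; 9; 10; 11]) /\
  in_system_of_sets C2_5 (shifted_set y k [:: 4; 5; 7; 8; 9]) /\
  in_system_of_sets C2_5 (shifted_set y k [:: 5; 6; 8; 9; 10; 12]) /\
  in_system_of_sets C2_5 (shifted_set y k [:: 4; 6; 7; 8; 10]).
Proof.
split; first exact: fg_system (shifted_set_head y k _ _) (fg_lengths_3567 y k).
split; first exact: fg_system (shifted_set_head y k _ _) (fg_lengths_4568 y k).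
split; first exact: fg_system (shifted_set_head y k _ _) (fg_lengths_56791011 y k).
split; first exact: fg_system (shifted_set_head y k _ _) (fg_lengths_45789 y k).
split; first exact: fg_system (shifted_set_head y k _ _) (fg_lengths_56891012 y k).
exact: fg_system (shifted_set_head y k _ _) (fg_lengths_467810 y k).
Qed.
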